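(* Let $(A,u_A)$ be an irreducible abstract state space. The following are equivalent: (a) $A$ is weakly self-dual and homogeneous; (b) every normalized state $\alpha$ in the interior of $A_+$ is the marginal of an isomorphism state in $A\otimes_{\max}A$, i.e., there is a state $\omega\in A\otimes_{\max}A$ such that $\hat\omega:A^*\to A$ is an order-isomorphism and $\hat\omega(u_A)=\alpha$.
   Context: An abstract state space is a pair $(A,u_A)$ where $A$ is a finite-dimensional real vector space with a closed, pointed, generating convex cone $A_+$, and $u_A$ is an interior point of the dual cone $A^*_+$; a normalized state is $\alpha\in A_+$ with $u_A(\alpha)=1$. $A$ is irreducible if there is no decomposition $A=A_1\oplus A_2$ into nonzero subspaces with $A_+=(A_+\cap A_1)+(A_+\cap A_2)$. An order-isomorphism is a linear bijection $\phi$ with $\phi(x)\ge0$ iff $x\ge0$. $A$ is weakly self-dual if there exists an order-isomorphism $A^*\to A$. $A$ is homogeneous if its group of order-automorphisms acts transitively on the interior of $A_+$. $A\otimes_{\max}A$ is the space of bilinear forms on $A^*\times A^*$ nonnegative on $A^*_+\times A^*_+$; a state is such a form with $\omega(u_A,u_A)=1$; $\hat\omega:A^*\to A$ is $\hat\omega(a)(b)=\omega(a,b)$, and $\hat\omega(u_A)$ is the marginal on the second factor. An isomorphism state is a state $\omega$ with $\hat\omega$ an order-isomorphism. *)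

(* A finite-dimensional real vector space is modelled as
   'rV[R]_n (R : realType); its dual A^* is identified with 'rV[R]_n via the
   standard pairing  <f, x> = \sum_i f_i x_i.  Linear maps are matrices acting
   on the right of row vectors. *)
From HB Require Import structures.
From mathcomp Require Import all_boot all_order all_algebra.
From mathcomp Require Import reals.
Set Implicit Arguments. Unset Strict Implicit. Unset Printing Implicit Defensive.
Import Order.TTheory GRing.Theory Num.Theory.
Local Open Scope ring_scope.

Section Defs.
Variables (R : realType) (n : nat).
Notation vec := 'rV[R]_n.

Definition dot (f x : vec) : R := \sum_(i < n) f 0 i * x 0 i.

(* topology of R^n (sup-norm balls; all norms are equivalent) *)
Definition interior (S : vec -> Prop) (x : vec) : Prop :=
  exists2 e : R, 0 < e & forall y : vec, (forall i, `|y 0 i - x 0 i| < e) -> S y.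
Definition closed_set (S : vec -> Prop) : Prop :=
  forall x : vec, ~ S x ->
    exists2 e : R, 0 < e & forall y : vec, (forall i, `|y 0 i - x 0 i| < e) -> ~ S y.

Definition convex_cone (K : vec -> Prop) : Prop :=
  [/\ K 0, (forall x y, K x -> K y -> K (x + y)) &
      (forall (t : R) x, 0 <= t -> K x -> K (t *: x))].
Definition pointed (K : vec -> Prop) : Prop := forall x, K x -> K (- x) -> x = 0.
Definition generating (K : vec -> Prop) : Prop :=
  forall x, exists a b, [/\ K a, K b & x = a - b].

Definition dual_cone (K : vec -> Prop) (f : vec) : Prop := forall x, K x -> 0 <= dot f x.

Definition abstract_state_space (K : vec -> Prop) (u : vec) : Prop :=
  [/\ convex_cone K, closed_set K, pointed K, generating K & interior (dual_cone K) u].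

(* no decomposition A = A1 (+) A2 into nonzero subspaces with
   A_+ = (A_+ /\ A1) + (A_+ /\ A2); subspaces are row spaces of matrices *)
Definition irreducible (K : vec -> Prop) : Prop :=
  ~ exists V1 V2 : 'M[R]_n,
      [/\ V1 != 0, V2 != 0, (V1 + V2 == 1%:M)%MS, mxdirect (V1 + V2) &
          forall x, K x <-> exists a b,
             [/\ K a, (a <= V1)%MS, K b, (b <= V2)%MS & x = a + b]].

Definition order_iso_dual (K : vec -> Prop) (M : 'M[R]_n) : Prop :=
  M \in unitmx /\ forall f : vec, K (f *m M) <-> dual_cone K f.

Definition order_auto (K : vec -> Prop) (M : 'M[R]_n) : Prop :=
  M \in unitmx /\ forall x : vec, K (x *m M) <-> K x.

Definition weakly_self_dual (K : vec -> Prop) : Prop :=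
  exists M, order_iso_dual K M.

Definition homogeneous (K : vec -> Prop) : Prop :=
  forall x y, interior K x -> interior K y ->
    exists M, order_auto K M /\ x *m M = y.

(* bilinear form omega(a,b) = a W b^T on A^* x A^*; element of A (x)_max A *)
Definition bilin (W : 'M[R]_n) (a b : vec) : R := dot b (a *m W).
Definition in_max_tensor (K : vec -> Prop) (W : 'M[R]_n) : Prop :=
  forall a b, dual_cone K a -> dual_cone K b -> 0 <= bilin W a b.
Definition max_tensor_state (K : vec -> Prop) (u : vec) (W : 'M[R]_n) : Prop :=
  in_max_tensor K W /\ bilin W u u = 1.
(* hat omega : A^* -> A is  a |-> a *m W, since <b, a *m W> = omega(a,b) *)
Definition hat (W : 'M[R]_n) (a : vec) : vec := a *m W.

End Defs.

(* An order-isomorphism W : A^* -> A maps the interior point u of the dual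
   cone into the interior of A_+, and any such W is positive on pairs of dual
   positive functionals, hence a state of A (x)_max A once normalized;
   homogeneity then moves its marginal to any normalized interior alpha.
   Conversely, isomorphism states W_x, W_y with marginals proportional to x and
   y compose to the order-automorphism W_x^-1 W_y, which after rescaling
   carries x to y. *)
From HB Require Import structures.
From mathcomp Require Import all_boot all_order all_algebra.
From mathcomp Require Import reals lra.
Set Implicit Arguments. Unset Strict Implicit. Unset Printing Implicit Defensive.
Import Order.TTheory GRing.Theory Num.Theory.
Local Open Scope ring_scope.

Section StateSpace.
Variables (R : realType) (n : nat).
Implicit Types (K : 'rV[R]_n -> Prop) (x y u f g : 'rV[R]_n) (M W : 'M[R]_n).

Lemma dotZr f (c : R) x : dot f (c *: x) = c * dot f x.
Proof. by rewrite /dot mulr_sumr; apply: eq_bigr => i _; rewrite mxE mulrCA. Qed.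

Lemma dotBZl f g (c : R) x : dot (f - c *: g) x = dot f x - c * dot g x.
Proof.
by rewrite /dot mulr_sumr -sumrB; apply: eq_bigr => i _; rewrite !mxE mulrBl mulrA.
Qed.

Lemma dotvv_gt0 x : x != 0 -> 0 < dot x x.
Proof.
move=> xn0; have sq_ge0 i : 0 <= x 0 i * x 0 i by rewrite -expr2 sqr_ge0.
rewrite lt_def (sumr_ge0 _ (fun i _ => sq_ge0 i)) andbT.
apply: contra xn0 => /eqP /psumr_eq0P xx0; apply/eqP/rowP => i.
by have /eqP := xx0 (fun i _ => sq_ge0 i) i isT; rewrite mulf_eq0 orbb !mxE => /eqP.
Qed.

Lemma cone_scaleP K (c : R) x : convex_cone K -> 0 < c -> K (c *: x) <-> K x.
Proof.
case=> _ _ KZ c_gt0; split => Kx; last exact: KZ (ltW c_gt0) Kx.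
have -> : x = c^-1 *: (c *: x) by rewrite scalerA mulVf ?scale1r // gt_eqF.
by apply: KZ => //; rewrite invr_ge0 ltW.
Qed.

Lemma cone_sum K (I : finType) (F : I -> 'rV[R]_n) :
  convex_cone K -> (forall i, K (F i)) -> K (\sum_i F i).
Proof. by case=> K0 KD _ KF; apply: big_ind. Qed.

Lemma interior_mem K x : interior K x -> K x.
Proof. by case=> e e_gt0 Ke; apply: Ke => i; rewrite subrr normr0. Qed.

Lemma interiorZ K (c : R) x :
  convex_cone K -> 0 < c -> interior K x -> interior K (c *: x).
Proof.
move=> Kcone c_gt0 [e e_gt0 Ke]; exists (c * e); first by rewrite mulr_gt0.
move=> y near_y; have -> : y = c *: (c^-1 *: y).
  by rewrite scalerA mulfV ?scale1r // gt_eqF.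
apply/(cone_scaleP _ Kcone c_gt0)/Ke => i; rewrite !mxE.
have -> : c^-1 * y 0 i - x 0 i = c^-1 * (y 0 i - c * x 0 i).
  by rewrite mulrBr mulrA mulVf ?mul1r // gt_eqF.
rewrite normrM gtr0_norm ?invr_gt0 // -(ltr_pM2l c_gt0).
rewrite mulrA mulfV ?mul1r ?gt_eqF //.
by have := near_y i; rewrite !mxE.
Qed.

(* Writing each basis vector as a difference a_i - b_i of positive vectors,
   the sum of all a_i + b_i absorbs every perturbation of size < 1. *)
Lemma generating_interior K :
  convex_cone K -> generating K -> exists x, interior K x.
Proof.
move=> Kcone Kgen.
have /fin_all_exists [ab ab_spec] : forall i : 'I_n, exists p : 'rV[R]_n * 'rV[R]_n,
    [/\ K p.1, K p.2 & delta_mx 0 i = p.1 - p.2].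
  by move=> i; have [a [b [Ka Kb ->]]] := Kgen (delta_mx 0 i); exists (a, b).
pose c := \sum_i ((ab i).1 + (ab i).2).
exists c; exists 1 => // y near_y.
have -> : y = \sum_i ((1 + (y - c) 0 i) *: (ab i).1 + (1 - (y - c) 0 i) *: (ab i).2).
  rewrite (eq_bigr (fun i => ((ab i).1 + (ab i).2) + (y - c) 0 i *: delta_mx 0 i)).
    by rewrite big_split /= -row_sum_delta addrC subrK.
  move=> i _; have [_ _ ->] := ab_spec i.
  by rewrite scalerDl scalerBl !scale1r scalerBr addrACA.
apply: cone_sum => // i; have [Ka Kb _] := ab_spec i.
case: Kcone => _ KD KZ; apply: KD; apply: KZ => //;
  have := near_y i; rewrite !mxE ltr_norml => /andP [? ?]; lra.
Qed.

Lemma interior_neq0 K x : (0 < n)%N -> pointed K -> interior K x -> x != 0.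
Proof.
move=> n_gt0 Kpt [e e_gt0 Ke]; apply/eqP => x0; subst x.
pose i0 := Ordinal n_gt0; pose v : 'rV[R]_n := (e / 2) *: delta_mx 0 i0.
have Kv w : w = v \/ w = - v -> K w.
  move=> w_def; apply: Ke => i; rewrite !mxE subr0.
  have e2_gt0 : 0 < e / 2 by rewrite divr_gt0.
  by case: w_def => ->; rewrite !mxE eqxx /=; case: (i == i0) => /=;
    rewrite ?mulr1 ?mulr0 ?normrN ?normr0 ?gtr0_norm //; lra.
have /matrixP/(_ 0 i0) := Kpt v (Kv v (or_introl erefl)) (Kv _ (or_intror erefl)).
by rewrite !mxE !eqxx mulr1 => /eqP; lra.
Qed.

Lemma small_multiple (e : R) x :
  0 < e -> exists2 d : R, 0 < d & forall i, `|d * x 0 i| < e.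
Proof.
move=> e_gt0; pose S := 1 + \sum_i `|x 0 i|.
have S_gt0 : 0 < S by rewrite ltr_pwDl // sumr_ge0.
exists (e / S) => [|i]; first by rewrite divr_gt0.
rewrite normrM gtr0_norm ?divr_gt0 //.
apply: (@lt_le_trans _ _ (e / S * S)); last by rewrite divfK ?gt_eqF.
rewrite ltr_pM2l ?divr_gt0 // /S (bigD1 i) //=.
have : 0 <= \sum_(j | j != i) `|x 0 j| by apply: sumr_ge0.
lra.
Qed.

(* [u - d x] stays in the dual cone for small d > 0; evaluating it at x gives
   d <x, x> <= <u, x>. *)
Lemma dual_interior_dot_gt0 K u x :
  interior (dual_cone K) u -> K x -> x != 0 -> 0 < dot u x.
Proof.
move=> [e e_gt0 Ke] Kx xn0; have [d d_gt0 small_dx] := small_multiple x e_gt0.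
have : 0 <= dot (u - d *: x) x.
  apply: Ke Kx => i; rewrite !mxE addrAC subrr add0r normrN.
  by have := small_dx i; rewrite mulrC.
by rewrite dotBZl; have := mulr_gt0 d_gt0 (dotvv_gt0 xn0); lra.
Qed.

Lemma mulmx_ball M (e : R) : 0 < e -> exists2 d : R, 0 < d &
  forall y : 'rV[R]_n, (forall i, `|y 0 i| < d) -> forall j, `|(y *m M) 0 j| < e.
Proof.
move=> e_gt0; pose B := 1 + \sum_i \sum_j `|M i j|.
have sum_ge0 : 0 <= \sum_i \sum_j `|M i j| by do 2!(apply: sumr_ge0 => ? _).
have B_gt0 : 0 < B by rewrite /B; lra.
exists (e / B) => [|y small_y j]; first by rewrite divr_gt0.
rewrite mxE; apply: le_lt_trans (ler_norm_sum _ _ _) _.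
apply: (@le_lt_trans _ _ (\sum_i e / B * `|M i j|)).
  by apply: ler_sum => i _; rewrite normrM ler_wpM2r // ltW.
have col_le_total : \sum_i `|M i j| <= \sum_i \sum_j `|M i j|.
  by apply: ler_sum => i _; rewrite (bigD1 j) //= lerDl sumr_ge0.
rewrite -mulr_sumr; apply: (@lt_le_trans _ _ (e / B * B)).
  by rewrite ltr_pM2l ?divr_gt0 // /B; lra.
by rewrite divfK ?gt_eqF.
Qed.

Lemma order_iso_interior K W u :
  order_iso_dual K W -> interior (dual_cone K) u -> interior K (u *m W).
Proof.
case=> W_unit W_iso [e e_gt0 Ke].
have [d d_gt0 small_image] := mulmx_ball (invmx W) e_gt0.
exists d => // y near_y; have -> : y = (y *m invmx W) *m W by rewrite mulmxKV.
apply/W_iso/Ke => j; have := small_image (y - u *m W) _ j.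
rewrite mulmxBl mulmxK // !mxE; apply=> i.
by have := near_y i; rewrite !mxE.
Qed.

Lemma interior_normalize K u x : abstract_state_space K u -> (0 < n)%N ->
  interior K x ->
  [/\ 0 < dot u x, interior K ((dot u x)^-1 *: x) & dot u ((dot u x)^-1 *: x) = 1].
Proof.
case=> Kcone _ Kpt _ u_int n_gt0 x_int.
have ux_gt0 : 0 < dot u x.
  apply: dual_interior_dot_gt0 u_int (interior_mem x_int) _.
  exact: interior_neq0 n_gt0 Kpt x_int.
split=> //; first by apply: interiorZ => //; rewrite invr_gt0.
by rewrite dotZr mulVf // gt_eqF.
Qed.

Lemma order_iso_max_tensor K W : order_iso_dual K W -> in_max_tensor K W.
Proof. by case=> _ W_iso a b Ka Kb; apply: Kb; apply/W_iso. Qed.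

Lemma order_iso_dual_mulmx K W M :
  order_iso_dual K W -> order_auto K M -> order_iso_dual K (W *m M).
Proof.
case=> W_unit W_iso [M_unit M_auto].
split; first by rewrite unitmx_mul W_unit M_unit.
by move=> f; rewrite mulmxA M_auto.
Qed.

Lemma order_auto_mulVmx K W1 W2 :
  order_iso_dual K W1 -> order_iso_dual K W2 -> order_auto K (invmx W1 *m W2).
Proof.
case=> W1_unit W1_iso [W2_unit W2_iso].
split; first by rewrite unitmx_mul unitmx_inv W1_unit W2_unit.
by move=> x; rewrite mulmxA W2_iso -W1_iso mulmxKV.
Qed.

Lemma order_autoZ K (c : R) M :
  convex_cone K -> 0 < c -> order_auto K M -> order_auto K (c *: M).
Proof.
move=> Kcone c_gt0 [M_unit M_auto]; split.
  by rewrite unitmxZ ?unitfE ?gt_eqF.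
by move=> x; rewrite -scalemxAr cone_scaleP.
Qed.

End StateSpace.

(* In dimension 0 the marginal condition is vacuous, as [dot u alpha = 0]. *)
Lemma weakly_self_dual_homogeneous_rV0 (R : realType) (K : 'rV[R]_0 -> Prop) :
  convex_cone K -> weakly_self_dual K /\ homogeneous K.
Proof.
case=> K0 _ _; have rV0 (v : 'rV[R]_0) : v = 0 by apply/rowP => -[].
split; last first.
  move=> x y _ _; exists 1%:M; rewrite mulmx1 (rV0 x) (rV0 y).
  by split=> //; split=> [|z]; rewrite ?unitmx1 ?mulmx1.
exists 1%:M; split=> [|f]; first exact: unitmx1.
by rewrite (rV0 (f *m 1%:M)); split=> // _ x _; rewrite /dot big_ord0.
Qed.

Section IsomorphismStates.
Variables (R : realType) (n : nat) (K : 'rV[R]_n -> Prop) (u : 'rV[R]_n).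
Hypothesis state_space : abstract_state_space K u.

Definition iso_state_marginals : Prop :=
  forall alpha : 'rV[R]_n, interior K alpha -> dot u alpha = 1 ->
    exists W : 'M[R]_n,
      [/\ max_tensor_state K u W, order_iso_dual K W & hat W u = alpha].

Lemma iso_state_marginalsP :
  weakly_self_dual K -> homogeneous K -> iso_state_marginals.
Proof.
case: state_space => _ _ _ _ u_int [W0 W0_iso] Khom alpha alpha_int alpha_state.
have [M [M_auto uW0M]] := Khom _ _ (order_iso_interior W0_iso u_int) alpha_int.
have WM_iso := order_iso_dual_mulmx W0_iso M_auto.
exists (W0 *m M); split=> //; last by rewrite /hat mulmxA.
by split; [exact: order_iso_max_tensor | rewrite /bilin mulmxA uW0M].
Qed.

Hypothesis n_gt0 : (0 < n)%N.
Hypothesis marginals : iso_state_marginals.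

Lemma iso_state_marginals_weakly_self_dual : weakly_self_dual K.
Proof.
case: (state_space) => Kcone _ _ Kgen _.
have [x x_int] := generating_interior Kcone Kgen.
have [_ alpha_int alpha_state] := interior_normalize state_space n_gt0 x_int.
by have [W [_ W_iso _]] := marginals alpha_int alpha_state; exists W.
Qed.

(* With [W_x u = x / <u,x>] and [W_y u = y / <u,y>], the automorphism
   [(<u,y> / <u,x>) W_x^-1 W_y] maps [x] to [y]. *)
Lemma iso_state_marginals_homogeneous : homogeneous K.
Proof.
move=> x y x_int y_int; have [Kcone _ _ _ _] := state_space.
have [ux_gt0 x'_int x'_state] := interior_normalize state_space n_gt0 x_int.
have [uy_gt0 y'_int y'_state] := interior_normalize state_space n_gt0 y_int.
have [Wx [_ Wx_iso uWx]] := marginals x'_int x'_state.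
have [Wy [_ Wy_iso uWy]] := marginals y'_int y'_state.
have c_gt0 : 0 < dot u y / dot u x by rewrite divr_gt0.
exists ((dot u y / dot u x) *: (invmx Wx *m Wy)).
split; first exact: order_autoZ Kcone c_gt0 (order_auto_mulVmx Wx_iso Wy_iso).
have Wx_unit : Wx \in unitmx by case: Wx_iso.
have x_eq : x = dot u x *: (u *m Wx).
  by rewrite [u *m Wx]uWx scalerA mulfV ?scale1r ?gt_eqF.
rewrite {1}x_eq -scalemxAr mulmxA -scalemxAl mulmxK // -scalemxAl [u *m Wy]uWy.
by rewrite !scalerA divfK ?mulfV ?scale1r ?gt_eqF.
Qed.

End IsomorphismStates.

Theorem corollary4p2 (R : realType) (n : nat) (K : 'rV[R]_n -> Prop) (u : 'rV[R]_n) :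
  abstract_state_space K u -> irreducible K ->
  ((weakly_self_dual K /\ homogeneous K) <->
   (forall alpha : 'rV[R]_n, interior K alpha -> dot u alpha = 1 ->
      exists W : 'M[R]_n,
        [/\ max_tensor_state K u W, order_iso_dual K W & hat W u = alpha])).
Proof.
move=> state_space _; split=> [[Kwsd Khom] | marginals].
  exact: (iso_state_marginalsP state_space Kwsd Khom).
have [n0|n_gt0] := posnP n.
  subst n; case: state_space => Kcone _ _ _ _.
  exact: weakly_self_dual_homogeneous_rV0.
split; [exact: (iso_state_marginals_weakly_self_dual state_space n_gt0 marginals) |
        exact: (iso_state_marginals_homogeneous state_space n_gt0 marginals)].
Qed.
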